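(* Let $G_i=(V_i,E_i)$ be a graph, $i\in\{1,2\}$, let $\delta_2$ be the minimum degree of $G_2$, let $S_1\subseteq V_1$ and let $k$ be an integer. If $S_1\times V_2$ is a $k$-daf set in $G_1\times G_2$, then $S_1$ is a $(k-\delta_2)$-daf set in $G_1$.
   Context: All graphs are finite and simple (with non-empty vertex sets). For a graph $G=(V,E)$, a set $S\subseteq V$ and $v\in V$, let $\delta_S(v)=|\{u\in S: uv\in E\}|$ and $\overline{S}=V\setminus S$. For an integer $k$, a non-empty set $S\subseteq V$ is a defensive $k$-alliance if $\delta_S(v)\ge \delta_{\overline S}(v)+k$ for every $v\in S$. A set $X\subseteq V$ is a defensive $k$-alliance free set ($k$-daf set) if no defensive $k$-alliance $S$ satisfies $S\subseteq X$. The Cartesian product $G_1\times G_2$ of $G_1=(V_1,E_1)$, $G_2=(V_2,E_2)$ has vertex set $V_1\times V_2$, with $(a,b)$ adjacent to $(c,d)$ iff either $a=c$ and $bd\in E_2$, or $b=d$ and $ac\in E_1$. *)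

From mathcomp Require Import all_boot all_order all_algebra.
Set Implicit Arguments. Unset Strict Implicit. Unset Printing Implicit Defensive.
Import GRing.Theory Num.Theory.

(* A (finite simple) graph is a vertex type T : finType with an adjacency
   relation e : rel T, assumed symmetric and irreflexive in the statement. *)

Definition deg_in (T : finType) (e : rel T) (S : {set T}) (v : T) : nat :=
  #|[set u in S | e v u]|.

Definition deg (T : finType) (e : rel T) (v : T) : nat := deg_in e [set: T] v.

(* minimum degree (the vertex set is assumed non-empty in the statement;
   the seed #|T| exceeds every degree, so it never is the minimum then) *)
Definition min_deg (T : finType) (e : rel T) : nat :=
  \big[minn/#|T|]_(v : T) deg e v.

Definition def_alliance (T : finType) (e : rel T) (k : int) (S : {set T}) : Prop :=
  S != set0 /\
  forall v, v \in S -> ((deg_in e S v)%:Z >= (deg_in e (~: S) v)%:Z + k)%R.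

Definition daf (T : finType) (e : rel T) (k : int) (X : {set T}) : Prop :=
  forall S : {set T}, S \subset X -> ~ def_alliance e k S.

Definition cart_rel (T1 T2 : finType) (e1 : rel T1) (e2 : rel T2) : rel (T1 * T2) :=
  fun x y => ((x.1 == y.1) && e2 x.2 y.2) || ((x.2 == y.2) && e1 x.1 y.1).

From mathcomp Require Import all_boot all_order all_algebra.
From mathcomp Require Import zify.
Import GRing.Theory Num.Theory.

(* Let S \subset S1 be a defensive (k - delta_2)-alliance of G1.
   We show that S x V2 is a defensive k-alliance of G1 x G2; it lies inside
   S1 x V2, contradicting the hypothesis that S1 x V2 is k-alliance free.
   For (v, w) with v \in S, the neighbours of (v, w) in the product split as
     - inside S x V2:  (N(v) \cap S) x {w}  disjoint union  {v} x N(w),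
     - outside S x V2: (N(v) \setminus S) x {w},
   so delta_{S x V2}(v, w) = delta_S(v) + deg(w) and
   delta_{complement}(v, w) = delta_{complement of S}(v).  Since
   deg(w) >= delta_2, the alliance inequality for v with constant k - delta_2
   yields the one for (v, w) with constant k. *)

(* The minimum degree is a lower bound for every degree.  (minn has no unit,
   so the generic bigop lemmas do not apply; we induct on the enumeration.) *)
Lemma min_deg_le {T : finType} (e : rel T) (w : T) : min_deg e <= deg e w.
Proof.
rewrite /min_deg; have : w \in index_enum T by rewrite mem_index_enum.
elim: (index_enum T) => [//|x s IHs]; rewrite big_cons inE.
case/orP => [/eqP <-|ws]; first exact: geq_minl.
by rewrite geq_min IHs ?orbT.
Qed.

Section CartesianDegrees.

Variables (T1 T2 : finType) (e1 : rel T1) (e2 : rel T2).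
Variables (S : {set T1}) (v : T1) (w : T2).
Hypothesis vS : v \in S.

Local Notation e := (cart_rel e1 e2).
Local Notation SX := (setX S [set: T2]).

Lemma deg_in_cylinder (e1_irr : irreflexive e1) :
  deg_in e SX (v, w) = deg_in e1 S v + deg e2 w.
Proof.
rewrite /deg /deg_in.
have -> : [set u in SX | e (v, w) u] =
          (fun x => (x, w)) @: [set x in S | e1 v x]
      :|: (fun y => (v, y)) @: [set y in [set: T2] | e2 w y].
  apply/setP => -[x y]; rewrite !inE andbT /cart_rel /=.
  apply/idP/orP.
  - case/andP => xS /orP [/andP [/eqP <- ew]|/andP [/eqP <- ev]].
      by right; apply/imsetP; exists y; rewrite ?inE.
    by left; apply/imsetP; exists x; rewrite ?inE ?xS.
  - case=> /imsetP [z]; rewrite !inE.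
      by case/andP => zS evz [-> ->]; rewrite zS eqxx evz orbT.
    by move=> ewz [-> ->]; rewrite vS eqxx ewz.
have disj : (fun x => (x, w)) @: [set x in S | e1 v x]
        :&: (fun y => (v, y)) @: [set y in [set: T2] | e2 w y] = set0.
  apply/setP => -[x y]; rewrite !inE.
  apply/negbTE/andP => -[/imsetP [z zN [-> _]] /imsetP [_ _ [zv _]]].
  by move: zN; rewrite inE zv e1_irr andbF.
rewrite cardsU disj cards0 subn0 !card_imset //.
- by move=> y1 y2 [].
- by move=> x1 x2 [].
Qed.

(* Degree of (v, w) out of the cylinder: only G1-edges inside the layer of w
   can leave S x V2, since the G2-edges stay in the fibre of v \in S. *)
Lemma deg_out_cylinder : deg_in e (~: SX) (v, w) = deg_in e1 (~: S) v.
Proof.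
rewrite /deg_in.
have -> : [set u in ~: SX | e (v, w) u] =
          (fun x => (x, w)) @: [set x in ~: S | e1 v x].
  apply/setP => -[x y]; rewrite !inE /cart_rel /= andbT.
  apply/idP/imsetP.
  - case/andP => xS /orP [/andP [/eqP xv _]|/andP [/eqP <- ev]].
      by rewrite -xv vS in xS.
    by exists x; rewrite // !inE xS.
  - by case=> z; rewrite !inE => /andP [zS evz] [-> ->]; rewrite zS eqxx evz orbT.
by rewrite card_imset // => x1 x2 [].
Qed.

End CartesianDegrees.

Arguments deg_in_cylinder {T1 T2} e1 e2 {S v} w.
Arguments deg_out_cylinder {T1 T2} e1 e2 {S v} w.

Lemma alliance_cylinder (T1 T2 : finType) (e1 : rel T1) (e2 : rel T2)
    (e1_irr : irreflexive e1) (T2_ne : 0 < #|T2|) (S : {set T1}) (k : int) :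
  def_alliance e1 (k - (min_deg e2)%:Z)%R S ->
  def_alliance (cart_rel e1 e2) k (setX S [set: T2]).
Proof.
case=> /set0Pn [v0 v0S] allied; split.
  move: T2_ne; rewrite -cardsT card_gt0 => /set0Pn [w0 _].
  by apply/set0Pn; exists (v0, w0); rewrite !inE v0S.
case=> v w; rewrite !inE andbT /= => vS.
rewrite (deg_in_cylinder e1 e2 w vS e1_irr) (deg_out_cylinder e1 e2 w vS).
have := allied v vS; have := min_deg_le e2 w; lia.
Qed.

Theorem corollary2 (T1 T2 : finType) (e1 : rel T1) (e2 : rel T2)
  (e1_sym : symmetric e1) (e1_irr : irreflexive e1)
  (e2_sym : symmetric e2) (e2_irr : irreflexive e2)
  (T1_ne : 0 < #|T1|) (T2_ne : 0 < #|T2|)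
  (S1 : {set T1}) (k : int) :
  daf (cart_rel e1 e2) k (setX S1 [set: T2]) ->
  daf e1 (k - (min_deg e2)%:Z)%R S1.
Proof.
move=> free_prod S sub_S1 allied.
apply: (free_prod (setX S [set: T2])); first exact: setXS.
exact: alliance_cylinder.
Qed.
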